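(* Let $\rho_{AB}$ be an arbitrary two-qubit state, $\rho_A=\operatorname{Tr}_B[\rho_{AB}]$, $\rho_B=\operatorname{Tr}_A[\rho_{AB}]$, $\mu_1,\mu_2\in[0,\tfrac{1}{\sqrt3}]$, and $\tau^1_{AB}=\mu_1\rho_{AB}+(1-\mu_1)\rho_A\otimes\tfrac{\mathbb{I}}{2}$, $\tau^2_{AB}=\mu_2\rho_{AB}+(1-\mu_2)\tfrac{\mathbb{I}}{2}\otimes\rho_B$. If the partial transpose of $\tau^1_{AB}$ has at least one negative eigenvalue, then $\rho_{AB}$ is EPR steerable from Bob to Alice. If the partial transpose of $\tau^2_{AB}$ has at least one negative eigenvalue, then $\rho_{AB}$ is EPR steerable from Alice to Bob.
   Context: $\mathbb{I}$ is the $2\times2$ identity. Partial transpose means $(\mathrm{id}\otimes T)$ applied to the two-qubit operator, with $T$ the transpose in the computational basis. EPR steerability: $\rho_{AB}$ is NOT EPR steerable from Bob to Alice iff there exist $P(\lambda)$, quantum states $\rho^A_\lambda$ of Alice, and arbitrary distributions $P(b|B,\lambda)$ such that for all POVM measurements $A=\{M^A_a\}$ of Alice, $B=\{M^B_b\}$ of Bob and all outcomes, $\operatorname{Tr}[(M^A_a\otimes M^B_b)\rho_{AB}]=\sum_\lambda P(\lambda)\operatorname{Tr}[\rho^A_\lambda M^A_a]P(b|B,\lambda)$; otherwise it is steerable from Bob to Alice. Steerability from Alice to Bob is defined symmetrically, with Bob's side given by quantum states $\rho^B_\lambda$ and Alice's side by arbitrary distributions $P(a|A,\lambda)$. *)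

From Stdlib Require Import Reals.
Open Scope R_scope.

Record C := mkC { Re : R; Im : R }.
Definition RtoC (x : R) : C := mkC x 0.
Definition C0 : C := RtoC 0.
Definition C1 : C := RtoC 1.
Definition Cadd (z w : C) : C := mkC (Re z + Re w) (Im z + Im w).
Definition Cmul (z w : C) : C :=
  mkC (Re z * Re w - Im z * Im w) (Re z * Im w + Im z * Re w).
Definition Cconj (z : C) : C := mkC (Re z) (- Im z).

Fixpoint Csum (n : nat) (f : nat -> C) : C :=
  match n with O => C0 | S m => Cadd (Csum m f) (f m) end.

Definition Cinfinite_sum (f : nat -> C) (z : C) : Prop :=
  infinite_sum (fun n => Re (f n)) (Re z) /\ infinite_sum (fun n => Im (f n)) (Im z).

(* ---------- matrices: only entries with indices < d are meaningful ---------- *)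
Definition Mat := nat -> nat -> C.
Definition Mid : Mat := fun i j => if Nat.eqb i j then C1 else C0.
Definition Madd (A B : Mat) : Mat := fun i j => Cadd (A i j) (B i j).
Definition Mscale (c : R) (A : Mat) : Mat := fun i j => Cmul (RtoC c) (A i j).
Definition Mmul (d : nat) (A B : Mat) : Mat :=
  fun i j => Csum d (fun k => Cmul (A i k) (B k j)).
Definition Mtrace (d : nat) (A : Mat) : C := Csum d (fun i => A i i).

Definition Hermitian (d : nat) (A : Mat) : Prop :=
  forall i j, (i < d)%nat -> (j < d)%nat -> A i j = Cconj (A j i).

Definition PSD (d : nat) (A : Mat) : Prop :=
  Hermitian d A /\
  forall v : nat -> C,
    0 <= Re (Csum d (fun i => Cmul (Cconj (v i)) (Csum d (fun j => Cmul (A i j) (v j))))).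

Definition density (d : nat) (rho : Mat) : Prop := PSD d rho /\ Mtrace d rho = C1.

Definition POVM (d n : nat) (M : nat -> Mat) : Prop :=
  (forall k, (k < n)%nat -> PSD d (M k)) /\
  (forall i j, (i < d)%nat -> (j < d)%nat -> Csum n (fun k => M k i j) = Mid i j).

(* two-qubit conventions: basis index of |i>_A|j>_B is 2*i + j *)
Definition kron22 (A B : Mat) : Mat :=
  fun I J => Cmul (A (I / 2)%nat (J / 2)%nat) (B (I mod 2)%nat (J mod 2)%nat).
Definition ptraceB (rho : Mat) : Mat :=
  fun i k => Cadd (rho (2 * i)%nat (2 * k)%nat) (rho (2 * i + 1)%nat (2 * k + 1)%nat).
Definition ptraceA (rho : Mat) : Mat :=
  fun j l => Cadd (rho j l) (rho (2 + j)%nat (2 + l)%nat).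
(* partial transpose (id (x) T) in the computational basis *)
Definition ptranspose (M : Mat) : Mat :=
  fun I J => M (2 * (I / 2) + J mod 2)%nat (2 * (J / 2) + I mod 2)%nat.

Definition has_neg_eigenvalue (d : nat) (M : Mat) : Prop :=
  exists lam : R, lam < 0 /\
    exists v : nat -> C, (exists i, (i < d)%nat /\ v i <> C0) /\
      forall i, (i < d)%nat -> Csum d (fun j => Cmul (M i j) (v j)) = Cmul (RtoC lam) (v i).

Definition prob_dist (P : nat -> R) : Prop :=
  (forall l, 0 <= P l) /\ infinite_sum P 1.

(* response functions P(b | B, lambda), B = (nB, MB) a measurement *)
Definition response (p : nat -> (nat -> Mat) -> nat -> nat -> R) : Prop :=
  forall nB MB l, POVM 2 nB MB ->
    (forall b, (b < nB)%nat -> 0 <= p nB MB l b) /\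
    Csum nB (fun b => RtoC (p nB MB l b)) = C1.

(* NOT EPR steerable from Bob to Alice: LHS model with quantum states on Alice *)
Definition unsteerable_BtoA (rho : Mat) : Prop :=
  exists (P : nat -> R) (rhoA : nat -> Mat) (p : nat -> (nat -> Mat) -> nat -> nat -> R),
    prob_dist P /\ (forall l, density 2 (rhoA l)) /\ response p /\
    forall nA MA nB MB, POVM 2 nA MA -> POVM 2 nB MB ->
      forall a b, (a < nA)%nat -> (b < nB)%nat ->
        Cinfinite_sum
          (fun l => Cmul (RtoC (P l)) (Cmul (Mtrace 2 (Mmul 2 (rhoA l) (MA a))) (RtoC (p nB MB l b))))
          (Mtrace 4 (Mmul 4 (kron22 (MA a) (MB b)) rho)).

(* NOT EPR steerable from Alice to Bob: LHS model with quantum states on Bob *)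
Definition unsteerable_AtoB (rho : Mat) : Prop :=
  exists (P : nat -> R) (rhoB : nat -> Mat) (p : nat -> (nat -> Mat) -> nat -> nat -> R),
    prob_dist P /\ (forall l, density 2 (rhoB l)) /\ response p /\
    forall nA MA nB MB, POVM 2 nA MA -> POVM 2 nB MB ->
      forall a b, (a < nA)%nat -> (b < nB)%nat ->
        Cinfinite_sum
          (fun l => Cmul (RtoC (P l)) (Cmul (RtoC (p nA MA l a)) (Mtrace 2 (Mmul 2 (rhoB l) (MB b)))))
          (Mtrace 4 (Mmul 4 (kron22 (MA a) (MB b)) rho)).

Definition steerable_BtoA (rho : Mat) : Prop := ~ unsteerable_BtoA rho.
Definition steerable_AtoB (rho : Mat) : Prop := ~ unsteerable_AtoB rho.

(* Suppose Bob cannot steer Alice, via a local hidden state model (P, rho^A_l, p).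
   Every correlator Tr[(σ_i ⊗ σ_j) rho] is a signed sum of joint outcome probabilities
   of Pauli measurements, which the model factorises; hence
   tau^1 = Σ_l P(l) rho^A_l ⊗ B_l with B_l = (1 + μ Σ_k m_k σ_k) / 2 and
   m_k = p(+|σ_k, l) - p(-|σ_k, l) ∈ [-1, 1].  For μ <= 1/√3 the Bloch vector μ m has
   length at most 1, so each B_l is a state: tau^1 is separable and its partial transpose
   is positive semidefinite.  The Alice-to-Bob claim follows by exchanging the qubits. *)

From Pilot Require Import Defs.
From Stdlib Require Import Reals Lra Psatz.
Open Scope R_scope.

Lemma C_eq (z w : Defs.C) : Re z = Re w -> Im z = Im w -> z = w.
Proof. destruct z, w; cbn; intros -> ->; reflexivity. Qed.

Lemma Csum_ext n f g : (forall i, (i < n)%nat -> f i = g i) -> Csum n f = Csum n g.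
Proof.
  induction n as [|n IH]; intros Hfg; cbn; [reflexivity|].
  rewrite IH, Hfg; auto with arith.
Qed.

Definition qform (d : nat) (M : Mat) (v : nat -> Defs.C) : R :=
  Re (Csum d (fun i => Cmul (Cconj (v i)) (Csum d (fun j => Cmul (M i j) (v j))))).

Lemma Csum_norm2_pos d (v : nat -> Defs.C) :
  (exists i, (i < d)%nat /\ v i <> C0) -> 0 < Re (Csum d (fun k => Cmul (Cconj (v k)) (v k))).
Proof.
  assert (Hnorm : forall z : Defs.C, Re (Cmul (Cconj z) z) = Re z * Re z + Im z * Im z)
    by (intros [x y]; cbn; ring).
  assert (Hnn : forall n, 0 <= Re (Csum n (fun k => Cmul (Cconj (v k)) (v k)))).
  { induction n as [|n IH]; cbn -[Cmul]; [lra|]. rewrite Hnorm. nra. }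
  induction d as [|d IH]; intros [i [Hi Hv]]; [lia|].
  cbn -[Cmul]. rewrite Hnorm.
  destruct (Nat.eq_dec i d) as [->|Hid].
  - specialize (Hnn d).
    assert (0 < Re (v d) * Re (v d) + Im (v d) * Im (v d)); [|lra].
    destruct (v d) as [x y]; cbn.
    destruct (Req_dec x 0) as [->|Hx]; [destruct (Req_dec y 0) as [->|Hy]|].
    + exfalso; apply Hv; reflexivity.
    + nra.
    + nra.
  - assert (0 < Re (Csum d (fun k => Cmul (Cconj (v k)) (v k)))).
    { apply IH. exists i. split; [lia|assumption]. }
    nra.
Qed.

Lemma neg_eigenvalue_qform_neg d M :
  has_neg_eigenvalue d M -> exists v, qform d M v < 0.
Proof.
  intros (lam & Hlam & v & Hv & Heig). exists v.
  assert (E : qform d M v = lam * Re (Csum d (fun k => Cmul (Cconj (v k)) (v k)))).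
  { unfold qform.
    rewrite (Csum_ext d _ (fun k => Cmul (RtoC lam) (Cmul (Cconj (v k)) (v k)))).
    - clear. induction d as [|d IH]; cbn -[Cmul]; [ring|].
      rewrite IH. cbn. ring.
    - intros k Hk. rewrite Heig by exact Hk. apply C_eq; cbn; ring. }
  rewrite E. pose proof (Csum_norm2_pos d v Hv). nra.
Qed.

Lemma infinite_sum_ext f g l :
  (forall n, f n = g n) -> infinite_sum f l -> infinite_sum g l.
Proof.
  intros Hfg Hf. apply (Un_cv_ext (sum_f_R0 f)); [|exact Hf].
  intros n. apply sum_eq. intros i _. apply Hfg.
Qed.

Lemma infinite_sum_scal c f l :
  infinite_sum f l -> infinite_sum (fun n => c * f n) (c * l).
Proof.
  intros Hf. apply (Un_cv_ext (fun n => c * sum_f_R0 f n)).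
  - intros n. rewrite scal_sum. apply sum_eq. intros; ring.
  - apply CV_mult; [|exact Hf].
    intros e He. exists 0%nat. intros n _. unfold Rdist. rewrite Rminus_diag, Rabs_R0. lra.
Qed.

Lemma infinite_sum_plus f g l1 l2 : infinite_sum f l1 -> infinite_sum g l2 ->
  infinite_sum (fun n => f n + g n) (l1 + l2).
Proof.
  intros Hf Hg. apply (Un_cv_ext (fun n => sum_f_R0 f n + sum_f_R0 g n)).
  - intros n. symmetry. apply sum_plus.
  - apply CV_plus; assumption.
Qed.

Lemma infinite_sum_sum_f_R0 N (F : nat -> nat -> R) (L : nat -> R) :
  (forall i, (i <= N)%nat -> infinite_sum (F i) (L i)) ->
  infinite_sum (fun n => sum_f_R0 (fun i => F i n) N) (sum_f_R0 L N).
Proof.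
  induction N as [|N IH]; intros HF; cbn.
  - apply HF. lia.
  - apply infinite_sum_plus; [apply IH; intros; apply HF|apply HF]; lia.
Qed.

Lemma infinite_sum_nonneg f l : (forall n, 0 <= f n) -> infinite_sum f l -> 0 <= l.
Proof.
  intros Hf Hl. apply (@Rle_cv_lim (fun _ => 0) (sum_f_R0 f)); [| |exact Hl].
  - intros n. apply cond_pos_sum. exact Hf.
  - intros e He. exists 0%nat. intros n _. unfold Rdist. rewrite Rminus_diag, Rabs_R0. lra.
Qed.

Definition pauli (i : nat) : Mat := fun r c =>
  match i, r, c with
  | 0%nat, _, _ => Mid r c
  | 1%nat, 0%nat, 1%nat | 1%nat, 1%nat, 0%nat => Defs.C1
  | 2%nat, 0%nat, 1%nat => mkC 0 (-1)
  | 2%nat, 1%nat, 0%nat => mkC 0 1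
  | 3%nat, 0%nat, 0%nat => Defs.C1
  | 3%nat, 1%nat, 1%nat => mkC (-1) 0
  | _, _, _ => Defs.C0
  end.

Definition transpose (A : Mat) : Mat := fun r c => A c r.

Definition corr (rho : Mat) (i j : nat) : R :=
  Re (Mtrace 4 (Mmul 4 (kron22 (pauli i) (pauli j)) rho)).

Definition tau1 (mu : R) (rho : Mat) : Mat :=
  Madd (Mscale mu rho) (Mscale (1 - mu) (kron22 (ptraceB rho) (Mscale (1/2) Mid))).

Definition depol_weight (mu : R) (j : nat) : R := if Nat.eqb j 0 then 1 else mu.

(* [rho_A ⊗ 1/2] has only the correlators [corr rho i 0], so mixing it in damps Bob's
   Pauli components [j <> 0] by [mu]. *)
Lemma qform_ptranspose_tau1_pauli mu rho v :
  qform 4 (ptranspose (tau1 mu rho)) v =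
  1/4 * sum_f_R0 (fun i => sum_f_R0 (fun j =>
    depol_weight mu j * qform 4 (kron22 (pauli i) (transpose (pauli j))) v * corr rho i j) 3) 3.
Proof.
  unfold qform, corr, tau1, ptranspose, transpose, Madd, Mscale, kron22, ptraceB,
    Mtrace, Mmul, pauli, Mid, depol_weight.
  cbn. field.
Qed.

Definition sgn (a : nat) : R := if Nat.eqb a 0 then 1 else -1.

Definition pauli_proj (k a : nat) : Mat := fun r c =>
  Cmul (RtoC (1/2)) (Cadd (Mid r c) (Cmul (RtoC (sgn a)) (pauli k r c))).

Lemma pauli_proj_POVM k : (1 <= k <= 3)%nat -> POVM 2 2 (pauli_proj k).
Proof.
  intros Hk. split; [intros a Ha; split|].
  - intros i j Hi Hj.
    destruct k as [|[|[|[|k]]]]; try lia;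
    destruct a as [|[|a]]; try lia;
    destruct i as [|[|i]]; try lia;
    destruct j as [|[|j]]; try lia;
    unfold pauli_proj, pauli, sgn, Mid, Cconj; apply C_eq; cbn; field.
  - intros w.
    destruct k as [|[|[|[|k]]]]; try lia;
    destruct a as [|[|a]]; try lia;
    unfold pauli_proj, pauli, sgn, Mid; cbn;
    destruct (w 0%nat) as [x0 y0]; destruct (w 1%nat) as [x1 y1]; cbn.
    all: pose proof (pow2_ge_0 (x0 + x1)); pose proof (pow2_ge_0 (x0 - x1));
      pose proof (pow2_ge_0 (y0 + y1)); pose proof (pow2_ge_0 (y0 - y1));
      pose proof (pow2_ge_0 (x0 + y1)); pose proof (pow2_ge_0 (x0 - y1));
      pose proof (pow2_ge_0 (y0 + x1)); pose proof (pow2_ge_0 (y0 - x1));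
      pose proof (pow2_ge_0 x0); pose proof (pow2_ge_0 x1);
      pose proof (pow2_ge_0 y0); pose proof (pow2_ge_0 y1); lra.
  - intros i j Hi Hj.
    destruct k as [|[|[|[|k]]]]; try lia;
    destruct i as [|[|i]]; try lia;
    destruct j as [|[|j]]; try lia;
    unfold pauli_proj, pauli, sgn, Mid; apply C_eq; cbn; field.
Qed.

Definition herm2 (a b c d : R) : Mat := fun r s =>
  match r, s with
  | 0%nat, 0%nat => RtoC a
  | 0%nat, 1%nat => mkC c d
  | 1%nat, 0%nat => mkC c (- d)
  | 1%nat, 1%nat => RtoC b
  | _, _ => Defs.C0
  end.

Lemma qform_kron_herm2_add r v a b c d a' b' c' d' :
  qform 4 (kron22 r (herm2 (a + a') (b + b') (c + c') (d + d'))) v =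
  qform 4 (kron22 r (herm2 a b c d)) v + qform 4 (kron22 r (herm2 a' b' c' d')) v.
Proof. unfold qform, kron22, herm2; cbn. ring. Qed.

Definition cnorm2 (z : Defs.C) : R := Re z * Re z + Im z * Im z.

Definition contract (w v : nat -> Defs.C) : nat -> Defs.C :=
  fun i => Csum 2 (fun j => Cmul (Cconj (w j)) (v (2 * i + j)%nat)).

Lemma qform_kron_herm2_rank1 r v w :
  qform 4 (kron22 r (herm2 (cnorm2 (w 0%nat)) (cnorm2 (w 1%nat))
     (Re (w 0%nat) * Re (w 1%nat) + Im (w 0%nat) * Im (w 1%nat))
     (Im (w 0%nat) * Re (w 1%nat) - Re (w 0%nat) * Im (w 1%nat)))) v
  = qform 2 r (contract w v).
Proof. unfold qform, kron22, herm2, contract, cnorm2; cbn. ring. Qed.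

Lemma qform_kron_herm2_nonneg r v a b c d :
  PSD 2 r -> 0 < a -> c * c + d * d <= a * b ->
  0 <= qform 4 (kron22 r (herm2 a b c d)) v.
Proof.
  intros [_ Hr] Ha Hcd.
  set (s := sqrt a).
  assert (Hs : s * s = a) by (apply sqrt_sqrt; lra).
  assert (Hs0 : 0 < s) by (apply sqrt_lt_R0; lra).
  set (t := sqrt (b - (c * c + d * d) / a)).
  assert (Ht : t * t = b - (c * c + d * d) / a).
  { apply sqrt_sqrt.
    apply Rmult_le_reg_r with a; [lra|].
    unfold Rdiv. rewrite Rmult_minus_distr_r, Rmult_assoc, Rinv_l; lra. }
  set (w1 := fun i : nat => if Nat.eqb i 0 then mkC s 0 else mkC (c / s) (- (d / s))).
  set (w2 := fun i : nat => if Nat.eqb i 0 then Defs.C0 else mkC t 0).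
  (* Cholesky: herm2 a b c d = w1 w1^* + w2 w2^* *)
  replace (herm2 a b c d) with (herm2
    (cnorm2 (w1 0%nat) + cnorm2 (w2 0%nat)) (cnorm2 (w1 1%nat) + cnorm2 (w2 1%nat))
    (Re (w1 0%nat) * Re (w1 1%nat) + Im (w1 0%nat) * Im (w1 1%nat)
     + (Re (w2 0%nat) * Re (w2 1%nat) + Im (w2 0%nat) * Im (w2 1%nat)))
    (Im (w1 0%nat) * Re (w1 1%nat) - Re (w1 0%nat) * Im (w1 1%nat)
     + (Im (w2 0%nat) * Re (w2 1%nat) - Re (w2 0%nat) * Im (w2 1%nat)))).
  - rewrite qform_kron_herm2_add, !qform_kron_herm2_rank1.
    pose proof (Hr (contract w1 v)). pose proof (Hr (contract w2 v)).
    unfold qform; lra.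
  - unfold w1, w2, cnorm2; cbn. f_equal.
    + rewrite Hs; ring.
    + rewrite Ht, <- Hs. field. lra.
    + field. lra.
    + field. lra.
Qed.

(* The identity is measured as the sum of both outcomes of [pauli 3]. *)
Definition meas_axis (i : nat) : nat := if Nat.eqb i 0 then 3 else i.
Definition outcome_sign (i a : nat) : R := if Nat.eqb i 0 then 1 else sgn a.

Lemma meas_axis_range i : (i < 4)%nat -> (1 <= meas_axis i <= 3)%nat.
Proof. intros. destruct i as [|[|[|[|i]]]]; cbn; lia. Qed.

Definition joint_prob (rho : Mat) (k a l b : nat) : R :=
  Re (Mtrace 4 (Mmul 4 (kron22 (pauli_proj k a) (pauli_proj l b)) rho)).

Lemma corr_joint_prob rho i j : (i < 4)%nat -> (j < 4)%nat ->
  sum_f_R0 (fun a => sum_f_R0 (fun b =>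
    outcome_sign i a * outcome_sign j b * joint_prob rho (meas_axis i) a (meas_axis j) b) 1) 1
  = corr rho i j.
Proof.
  intros Hi Hj.
  destruct i as [|[|[|[|i]]]]; try lia;
  destruct j as [|[|[|[|j]]]]; try lia;
  unfold joint_prob, corr, pauli_proj, meas_axis, outcome_sign, sgn,
    Mtrace, Mmul, kron22, pauli, Mid; cbn; field.
Qed.

Definition pauli_functional (mu : R) (v : nat -> Defs.C) (T : nat -> nat -> nat -> nat -> R) : R :=
  1/4 * sum_f_R0 (fun i => sum_f_R0 (fun j =>
    depol_weight mu j * qform 4 (kron22 (pauli i) (transpose (pauli j))) v *
    sum_f_R0 (fun a => sum_f_R0 (fun b =>
      outcome_sign i a * outcome_sign j b * T (meas_axis i) a (meas_axis j) b) 1) 1) 3) 3.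

Lemma qform_ptranspose_tau1 mu rho v :
  qform 4 (ptranspose (tau1 mu rho)) v = pauli_functional mu v (joint_prob rho).
Proof.
  rewrite qform_ptranspose_tau1_pauli. unfold pauli_functional. f_equal.
  apply sum_eq. intros i Hi. apply sum_eq. intros j Hj.
  rewrite corr_joint_prob by lia. reflexivity.
Qed.

(* The transpose of the qubit state [(1 + m1 σ1 + m2 σ2 + m3 σ3) / 2]. *)
Definition bloch_mat (m1 m2 m3 : R) : Mat :=
  herm2 ((1 + m3) / 2) ((1 - m3) / 2) (m1 / 2) (m2 / 2).

Lemma qform_kron_bloch_nonneg r v m1 m2 m3 :
  PSD 2 r -> m1 * m1 + m2 * m2 + m3 * m3 <= 1 -> m3 * m3 < 1 ->
  0 <= qform 4 (kron22 r (bloch_mat m1 m2 m3)) v.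
Proof. intros Hr Hm Hm3. apply qform_kron_herm2_nonneg; [exact Hr | nra | nra]. Qed.

Lemma pauli_functional_product mu v r (pi : nat -> nat -> R) :
  Hermitian 2 r -> pi 3%nat 1%nat = 1 - pi 3%nat 0%nat ->
  pauli_functional mu v (fun k a l b => Re (Mtrace 2 (Mmul 2 r (pauli_proj k a))) * pi l b) =
  qform 4 (kron22 r (bloch_mat (mu * (pi 1%nat 0%nat - pi 1%nat 1%nat))
                               (mu * (pi 2%nat 0%nat - pi 2%nat 1%nat))
                               (mu * (pi 3%nat 0%nat - pi 3%nat 1%nat)))) v.
Proof.
  intros Hr Hpi3.
  assert (H10 : r 1%nat 0%nat = Cconj (r 0%nat 1%nat)) by (apply Hr; lia).
  assert (Hdiag : forall i, (i < 2)%nat -> Im (r i i) = 0).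
  { intros i Hi. pose proof (Hr i i Hi Hi) as E.
    destruct (r i i) as [x y]; cbn. injection E. lra. }
  pose proof (Hdiag 0%nat ltac:(lia)) as Hr00. pose proof (Hdiag 1%nat ltac:(lia)) as Hr11.
  unfold pauli_functional, qform, bloch_mat, herm2, kron22, pauli_proj, pauli, transpose,
    meas_axis, outcome_sign, sgn, depol_weight, Mtrace, Mmul, Mid.
  cbn. rewrite H10. cbn. rewrite Hr00, Hr11, Hpi3. field.
Qed.

Definition response_probs (pi : nat -> nat -> R) : Prop :=
  forall k, (1 <= k <= 3)%nat -> 0 <= pi k 0%nat /\ 0 <= pi k 1%nat /\ pi k 0%nat + pi k 1%nat = 1.

Lemma pauli_functional_product_nonneg mu v r pi :
  density 2 r -> response_probs pi -> 0 <= mu -> 3 * (mu * mu) <= 1 ->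
  0 <= pauli_functional mu v (fun k a l b => Re (Mtrace 2 (Mmul 2 r (pauli_proj k a))) * pi l b).
Proof.
  intros [Hr _] Hpi Hmu Hmu3.
  assert (Hm : forall k, (1 <= k <= 3)%nat ->
    (mu * (pi k 0%nat - pi k 1%nat)) * (mu * (pi k 0%nat - pi k 1%nat)) <= mu * mu).
  { intros k Hk. destruct (Hpi k Hk) as (H0 & H1 & Hsum).
    assert ((pi k 0%nat - pi k 1%nat) * (pi k 0%nat - pi k 1%nat) <= 1) by nra.
    nra. }
  pose proof (Hm 1%nat ltac:(lia)). pose proof (Hm 2%nat ltac:(lia)).
  pose proof (Hm 3%nat ltac:(lia)). destruct (Hpi 3%nat ltac:(lia)) as (_ & _ & Hsum3).
  rewrite pauli_functional_product by (apply Hr || lra).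
  apply qform_kron_bloch_nonneg; [exact Hr | lra | lra].
Qed.

Lemma infinite_sum_pauli_functional mu v (P : nat -> R) T T0 :
  (forall k a l b, (1 <= k <= 3)%nat -> (a < 2)%nat -> (1 <= l <= 3)%nat -> (b < 2)%nat ->
     infinite_sum (fun n => P n * T n k a l b) (T0 k a l b)) ->
  infinite_sum (fun n => P n * pauli_functional mu v (T n)) (pauli_functional mu v T0).
Proof.
  intros HT.
  apply (infinite_sum_ext (fun n => pauli_functional mu v (fun k a l b => P n * T n k a l b))).
  { intros n. unfold pauli_functional. cbn [sum_f_R0]. ring. }
  apply infinite_sum_scal.
  apply infinite_sum_sum_f_R0; intros i Hi. apply infinite_sum_sum_f_R0; intros j Hj.
  apply infinite_sum_scal.
  apply infinite_sum_sum_f_R0; intros a Ha. apply infinite_sum_sum_f_R0; intros b Hb.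
  apply infinite_sum_scal.
  apply HT; [apply meas_axis_range | | apply meas_axis_range | ]; lia.
Qed.

Lemma unsteerable_BtoA_tau1_PPT rho mu v :
  unsteerable_BtoA rho -> 0 <= mu -> 3 * (mu * mu) <= 1 ->
  0 <= qform 4 (ptranspose (tau1 mu rho)) v.
Proof.
  intros (P & rhoA & p & [HP _] & HrhoA & Hresp & Hmodel) Hmu Hmu3.
  rewrite qform_ptranspose_tau1.
  apply (infinite_sum_nonneg (fun n => P n * pauli_functional mu v
    (fun k a l b => Re (Mtrace 2 (Mmul 2 (rhoA n) (pauli_proj k a))) * p 2%nat (pauli_proj l) n b))).
  - intros n. apply Rmult_le_pos; [apply HP|].
    apply pauli_functional_product_nonneg; auto.
    intros k Hk. destruct (Hresp 2%nat (pauli_proj k) n (pauli_proj_POVM k Hk)) as [Hnn Hsum].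
    apply (f_equal Re) in Hsum. cbn in Hsum.
    repeat split; [apply Hnn; lia | apply Hnn; lia | lra].
  - apply infinite_sum_pauli_functional. intros k a l b Hk Ha Hl Hb.
    destruct (Hmodel 2%nat (pauli_proj k) 2%nat (pauli_proj l)
                (pauli_proj_POVM k Hk) (pauli_proj_POVM l Hl) a b Ha Hb) as [HRe _].
    eapply infinite_sum_ext; [|exact HRe]. intros n. cbn. ring.
Qed.

Definition swap_index (I : nat) : nat := (2 * (I mod 2) + I / 2)%nat.
Definition swap_qubits (rho : Mat) : Mat := fun I J => rho (swap_index I) (swap_index J).

Lemma trace_kron22_swap_qubits X Y rho :
  Mtrace 4 (Mmul 4 (kron22 X Y) (swap_qubits rho)) = Mtrace 4 (Mmul 4 (kron22 Y X) rho).
Proof. apply C_eq; unfold Mtrace, Mmul, kron22, swap_qubits, swap_index; cbn; ring. Qed.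

Lemma unsteerable_AtoB_swap_qubits rho :
  unsteerable_AtoB rho -> unsteerable_BtoA (swap_qubits rho).
Proof.
  intros (P & rhoB & p & HP & HrhoB & Hresp & Hmodel).
  exists P, rhoB, p. do 3 (split; [assumption|]).
  intros nA MA nB MB HA HB a b Ha Hb.
  destruct (Hmodel nB MB nA MA HB HA b a Hb Ha) as [HRe HIm].
  rewrite trace_kron22_swap_qubits. split.
  - eapply infinite_sum_ext; [|exact HRe]. intros n. cbn. ring.
  - eapply infinite_sum_ext; [|exact HIm]. intros n. cbn. ring.
Qed.

Definition tau2 (mu : R) (rho : Mat) : Mat :=
  Madd (Mscale mu rho) (Mscale (1 - mu) (kron22 (Mscale (1/2) Mid) (ptraceA rho))).

(* After the swap the transpose acts on the first qubit, i.e. the matrix is the full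
   transpose of the [tau1] one; conjugating the test vector compensates. *)
Lemma qform_ptranspose_tau2 mu rho v :
  qform 4 (ptranspose (tau2 mu rho)) v =
  qform 4 (ptranspose (tau1 mu (swap_qubits rho))) (fun I => Cconj (v (swap_index I))).
Proof.
  unfold qform, tau1, tau2, ptranspose, Madd, Mscale, kron22, ptraceA, ptraceB,
    swap_qubits, swap_index, Mid.
  cbn. field.
Qed.

Lemma sqr_le_one_third mu : 0 <= mu <= 1 / sqrt 3 -> 3 * (mu * mu) <= 1.
Proof.
  intros [Hmu0 Hmu].
  assert (Hs : sqrt 3 * sqrt 3 = 3) by (apply sqrt_sqrt; lra).
  assert (Hs0 : 0 < sqrt 3) by (apply sqrt_lt_R0; lra).
  assert (mu * sqrt 3 <= 1).
  { apply (Rmult_le_compat_r (sqrt 3)) in Hmu; [|lra].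
    unfold Rdiv in Hmu. rewrite Rmult_1_l, Rinv_l in Hmu; lra. }
  nra.
Qed.

Theorem mainTheorem2 (rho : Mat) (mu1 mu2 : R) :
  density 4 rho ->
  0 <= mu1 <= 1 / sqrt 3 ->
  0 <= mu2 <= 1 / sqrt 3 ->
  (has_neg_eigenvalue 4
     (ptranspose (Madd (Mscale mu1 rho)
                       (Mscale (1 - mu1) (kron22 (ptraceB rho) (Mscale (1/2) Mid))))) ->
   steerable_BtoA rho) /\
  (has_neg_eigenvalue 4
     (ptranspose (Madd (Mscale mu2 rho)
                       (Mscale (1 - mu2) (kron22 (Mscale (1/2) Mid) (ptraceA rho))))) ->
   steerable_AtoB rho).
Proof.
  intros _ Hmu1 Hmu2. split; intros Hneg Hunsteerable;
    destruct (neg_eigenvalue_qform_neg 4 _ Hneg) as [v Hv].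
  - pose proof (unsteerable_BtoA_tau1_PPT rho mu1 v Hunsteerable
      (proj1 Hmu1) (sqr_le_one_third mu1 Hmu1)).
    change (qform 4 (ptranspose (tau1 mu1 rho)) v < 0) in Hv. lra.
  - pose proof (unsteerable_BtoA_tau1_PPT (swap_qubits rho) mu2
      (fun I => Cconj (v (swap_index I))) (unsteerable_AtoB_swap_qubits rho Hunsteerable)
      (proj1 Hmu2) (sqr_le_one_third mu2 Hmu2)).
    change (qform 4 (ptranspose (tau2 mu2 rho)) v < 0) in Hv.
    rewrite qform_ptranspose_tau2 in Hv. lra.
Qed.
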